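(* Let $H_A,H_B$ be finite-dimensional Hilbert spaces and let $\Phi:B(H_A)\to B(H_B)$ be a positive, trace-preserving linear map whose adjoint $\Phi^*:B(H_B)\to B(H_A)$ (with respect to the Hilbert–Schmidt inner product) satisfies the Schwarz-type inequality $$\Phi^{*}(\rho^{*})\,\Phi^{*}(\sigma)^{-1}\,\Phi^{*}(\rho)\le \Phi^{*}(\rho^{*}\sigma^{-1}\rho)$$ for every $\rho\in B(H_B)$ and every positive definite $\sigma\in B(H_B)$ (with $\Phi^*(\sigma)$ invertible). Let $X\in B(H_A)$ be positive definite with $\Phi(X)$ invertible, and let $\omega\in B(H_B)$ be positive definite. Define $$\tau=X^{1/2}\,\Phi^{*}\!\big(\Phi(X)^{-1/2}\,\omega\, \Phi(X)^{-1/2}\big)\,X^{1/2}\in B(H_A),$$ and assume $\tau$ is invertible. Define the linear map $V:B(H_B)\to B(H_A)$ by $V(\rho)=\Phi^{*}\big(\rho\,\Phi(X)^{-1/2}\big)X^{1/2}$. Then for every positive semidefinite $Y\in B(H_A)$, $$V^{*}\,\Delta(Y,\tau)\,V\le \Delta(\Phi(Y),\omega)$$ as operators on the Hilbert space $B(H_B)$ equipped with the inner product $\langle A,B\rangle=\operatorname{tr}(A^*B)$.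
   Context: For a positive semidefinite operator $\rho$ and a positive definite operator $\sigma$ on a finite-dimensional Hilbert space $H$, the relative modular operator $\Delta(\rho,\sigma)$ is the linear map on $B(H)$ given by $\Delta(\rho,\sigma)(Z)=\rho Z\sigma^{-1}$ (left multiplication by $\rho$ composed with right multiplication by $\sigma^{-1}$); it is a positive operator on $B(H)$ with the Hilbert–Schmidt inner product $\langle A,B\rangle=\operatorname{tr}(A^*B)$. $V^*$ denotes the adjoint of $V$ with respect to the Hilbert–Schmidt inner products. *)

From HB Require Import structures.
From mathcomp Require Import all_boot all_order all_algebra.
From mathcomp Require Import complex.
From mathcomp Require Import reals.
Set Implicit Arguments. Unset Strict Implicit. Unset Printing Implicit Defensive.
Import Order.TTheory GRing.Theory Num.Theory.
Local Open Scope ring_scope.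

(* Finite-dimensional Hilbert spaces are C^n with C = R[i], R : realType;
   B(H) is the type of square matrices 'M[C]_n. *)

Definition adjmx (C : numClosedFieldType) (m n : nat) (A : 'M[C]_(m, n)) : 'M[C]_(n, m) :=
  (map_mx Num.conj A)^T.

Definition hs (C : numClosedFieldType) (n : nat) (A B : 'M[C]_n) : C :=
  \tr (adjmx A *m B).

Definition psd (C : numClosedFieldType) (n : nat) (A : 'M[C]_n) : Prop :=
  forall v : 'cV[C]_n, 0 <= (adjmx v *m A *m v) 0 0.
Definition pd (C : numClosedFieldType) (n : nat) (A : 'M[C]_n) : Prop :=
  forall v : 'cV[C]_n, v != 0 -> 0 < (adjmx v *m A *m v) 0 0.

Definition mx_le (C : numClosedFieldType) (n : nat) (A B : 'M[C]_n) : Prop :=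
  psd (B - A).

Definition op_le (C : numClosedFieldType) (n : nat) (L M : 'M[C]_n -> 'M[C]_n) : Prop :=
  forall Z : 'M[C]_n, 0 <= hs Z (M Z - L Z).

Definition relmod (C : numClosedFieldType) (n : nat) (rho sigma : 'M[C]_n) : 'M[C]_n -> 'M[C]_n :=
  fun Z => rho *m Z *m invmx sigma.

Definition hs_adjoint (C : numClosedFieldType) (n m : nat)
  (F : 'M[C]_n -> 'M[C]_m) (G : 'M[C]_m -> 'M[C]_n) : Prop :=
  forall (A : 'M[C]_m) (B : 'M[C]_n), hs A (F B) = hs (G A) B.

Definition is_sqrtm (C : numClosedFieldType) (n : nat) (A S : 'M[C]_n) : Prop :=
  psd S /\ S *m S = A.

From HB Require Import structures.
From mathcomp Require Import all_boot all_order all_algebra.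
From mathcomp Require Import complex.
From mathcomp Require Import reals.
Import Order.TTheory GRing.Theory Num.Theory.
Local Open Scope ring_scope.

(* Write A' for the adjoint of A.  Fix Z in B(H_B) and put
   iT = Phi(X)^{-1/2}, sigma = iT omega iT, S = Phi^*(sigma) and K = Z iT.
   Cyclicity of the trace and the duality between Phi and Phi^* turn both
   quadratic forms into traces against Y:
     <Z, Delta(Phi Y, omega) Z>  = tr (Y Phi^*(K sigma^-1 K')),
     <Z, V^* Delta(Y, tau) V Z>  = tr (Y Phi^*(K) S^-1 Phi^*(K')),
   using tau = X^{1/2} S X^{1/2} and the congruence identity
   (K H) (H S H)^-1 (K H)' = K S^-1 K' for self-adjoint invertible H.
   The difference is tr (Y D) where D >= 0 is exactly the Schwarz inequality
   at rho = K', and tr (Y D) >= 0 for positive semidefinite Y and D. *)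

Section Adjoint.
Context {C : numClosedFieldType}.

Lemma adjmxK m n (A : 'M[C]_(m, n)) : adjmx (adjmx A) = A.
Proof. by apply/matrixP=> i j; rewrite !mxE conjCK. Qed.

Lemma adjmxM m n p (A : 'M[C]_(m, n)) (B : 'M[C]_(n, p)) :
  adjmx (A *m B) = adjmx B *m adjmx A.
Proof. by rewrite /adjmx map_mxM trmx_mul. Qed.

Lemma adjmx0 m n : adjmx (0 : 'M[C]_(m, n)) = 0.
Proof. by apply/matrixP=> i j; rewrite !mxE rmorph0. Qed.

Lemma adjmxD m n (A B : 'M[C]_(m, n)) : adjmx (A + B) = adjmx A + adjmx B.
Proof. by apply/matrixP=> i j; rewrite !mxE rmorphD. Qed.

Lemma adjmxB m n (A B : 'M[C]_(m, n)) : adjmx (A - B) = adjmx A - adjmx B.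
Proof. by apply/matrixP=> i j; rewrite !mxE rmorphB. Qed.

Lemma adjmxZ m n a (A : 'M[C]_(m, n)) : adjmx (a *: A) = a^* *: adjmx A.
Proof. by apply/matrixP=> i j; rewrite !mxE rmorphM. Qed.

Lemma adjmx_sum m n I r (P : pred I) (F : I -> 'M[C]_(m, n)) :
  adjmx (\sum_(i <- r | P i) F i) = \sum_(i <- r | P i) adjmx (F i).
Proof. exact: (big_morph _ (@adjmxD m n) (@adjmx0 m n)). Qed.

Lemma adjmx_inv n (A : 'M[C]_n) : adjmx (invmx A) = invmx (adjmx A).
Proof. by rewrite /adjmx map_invmx trmx_inv. Qed.

Lemma tr_adjmx n (A : 'M[C]_n) : \tr (adjmx A) = (\tr A)^*.
Proof.
rewrite /adjmx mxtrace_tr /mxtrace rmorph_sum.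
by apply: eq_bigr => i _; rewrite mxE.
Qed.

Lemma adjmx_delta n (i : 'I_n) : adjmx (delta_mx i 0 : 'cV[C]_n) = delta_mx 0 i.
Proof. by apply/matrixP=> a b; rewrite !mxE rmorph_nat andbC. Qed.

Lemma hsB n (A B D : 'M[C]_n) : hs A (B - D) = hs A B - hs A D.
Proof. by rewrite /hs mulmxBr linearB. Qed.

Lemma hs_conj n (A B : 'M[C]_n) : hs A B = (hs B A)^*.
Proof. by rewrite /hs -tr_adjmx adjmxM adjmxK. Qed.

Lemma hs_inj n (P Q : 'M[C]_n) : (forall B, hs P B = hs Q B) -> P = Q.
Proof.
move=> eqPQ; apply/matrixP=> i j.
have entry M : hs M ((delta_mx i 0 : 'cV[C]_n) *m delta_mx 0 j) = (M i j)^*.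
  by rewrite /hs mulmxA mxtrace_mulC mulmxA /mxtrace big_ord1 -rowE -colE !mxE.
by apply: (can_inj conjCK); rewrite -!entry.
Qed.

Lemma hs_adjointC {n m} {F : 'M[C]_n -> 'M[C]_m} {G} (FG : hs_adjoint F G) A B :
  hs A (G B) = hs (F A) B.
Proof. by rewrite hs_conj -FG -hs_conj. Qed.

End Adjoint.

Section Polarization.
Context {C : numClosedFieldType}.

Lemma adjmx_polar k (x y : 'M[C]_k) :
  adjmx (x + y) = x + y -> adjmx ('i *: (x - y)) = 'i *: (x - y) ->
  y = adjmx x.
Proof.
rewrite adjmxD adjmxZ adjmxB conjCi => sum_sa diff_sa.
have diffE : adjmx x - adjmx y = y - x.
  have := congr1 ( *:%R 'i) diff_sa.
  by rewrite !scalerA mulrN mulCii opprK scale1r scaleN1r opprB.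
have : y *+ 2 = adjmx x *+ 2.
  have -> : y *+ 2 = (x + y) + (y - x) by rewrite addrC addrA subrK -mulr2n.
  by rewrite -sum_sa -diffE addrACA subrr addr0 mulr2n.
by rewrite -!scaler_nat => /scalerI; apply; rewrite pnatr_eq0.
Qed.

Lemma rank1_expand n (u w : 'cV[C]_n) c :
  (u + c *: w) *m adjmx (u + c *: w) =
  u *m adjmx u + c *: (w *m adjmx u) + c^* *: (u *m adjmx w)
  + (c * c^*) *: (w *m adjmx w).
Proof.
rewrite adjmxD adjmxZ !mulmxDr !mulmxDl -!scalemxAl -!scalemxAr scalerA.
by rewrite !addrA.
Qed.

Lemma addr_cancel4 (V : zmodType) (a b c d : V) : a + b + c + d - a - d = b + c.
Proof.
by apply/eqP; rewrite !subr_eq; apply/eqP; rewrite [RHS]addrC !addrA.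
Qed.

Lemma linear_rank1_adj {n m} {F : {linear 'M[C]_n -> 'M[C]_m}}
    (F_sa : forall u : 'cV[C]_n, adjmx (F (u *m adjmx u)) = F (u *m adjmx u))
    (u w : 'cV[C]_n) :
  F (w *m adjmx u) = adjmx (F (u *m adjmx w)).
Proof.
apply: adjmx_polar.
  have -> : F (u *m adjmx w) + F (w *m adjmx u) =
      F ((u + 1 *: w) *m adjmx (u + 1 *: w)) - F (u *m adjmx u)
      - F (w *m adjmx w).
    by rewrite rank1_expand rmorph1 mulr1 !scale1r !linearD addr_cancel4 addrC.
  by rewrite !adjmxB !F_sa.
have -> : 'i *: (F (u *m adjmx w) - F (w *m adjmx u)) =
    F ((u + (- 'i) *: w) *m adjmx (u + (- 'i) *: w)) - F (u *m adjmx u)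
    - F (w *m adjmx w).
  have conj_mi : (- 'i)^* = 'i :> C by rewrite raddfN /= conjCi opprK.
  rewrite rank1_expand conj_mi mulNr mulCii opprK scale1r.
  by rewrite !linearD !linearZ /= addr_cancel4 scalerN scaleNr addrC.
by rewrite !adjmxB !F_sa.
Qed.

Lemma col_expansion n (A : 'M[C]_n) :
  A = \sum_(j < n) col j A *m adjmx (delta_mx j 0 : 'cV[C]_n).
Proof.
apply/matrixP=> i k; rewrite summxE (bigD1 k) //= big1 => [|j jk].
  by rewrite adjmx_delta !mxE big_ord1 !mxE !eqxx /= mulr1 addr0.
by rewrite adjmx_delta !mxE big_ord1 !mxE eqxx /= eq_sym (negbTE jk) mulr0.
Qed.

Lemma linear_adj {n m} {F : {linear 'M[C]_n -> 'M[C]_m}}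
    (F_sa : forall u : 'cV[C]_n, adjmx (F (u *m adjmx u)) = F (u *m adjmx u))
    A :
  F (adjmx A) = adjmx (F A).
Proof.
rewrite [A]col_expansion adjmx_sum !linear_sum adjmx_sum.
by apply: eq_bigr => j _; rewrite adjmxM adjmxK (linear_rank1_adj F_sa).
Qed.

Definition trace_form {n} (A M : 'M[C]_n) : 'M[C]_1 := (\tr (A *m M))%:M.

Lemma trace_form_is_linear {n} (A : 'M[C]_n) : linear (trace_form A).
Proof.
move=> a M N; rewrite /trace_form mulmxDr -scalemxAr linearD linearZ /=.
by rewrite raddfD scale_scalar_mx.
Qed.

HB.instance Definition _ n (A : 'M[C]_n) :=
  GRing.isLinear.Build C 'M[C]_n 'M[C]_1 _ (trace_form A)
    (trace_form_is_linear A).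

Lemma trace_form_rank1 {n} (A : 'M[C]_n) (u w : 'cV[C]_n) :
  trace_form A (u *m adjmx w) = adjmx w *m A *m u.
Proof.
rewrite /trace_form mulmxA mxtrace_mulC mulmxA.
by apply/matrixP=> i j; rewrite !ord1 /mxtrace big_ord1 !mxE eqxx mulr1n.
Qed.

Lemma psd_adj {n} {A : 'M[C]_n} : psd A -> adjmx A = A.
Proof.
move=> A_psd; apply/matrixP=> i j.
have form_sa (u : 'cV[C]_n) :
    adjmx (trace_form A (u *m adjmx u)) = trace_form A (u *m adjmx u).
  rewrite trace_form_rank1; apply/matrixP=> a b; rewrite !ord1 2!mxE.
  by rewrite conj_Creal // ger0_real // A_psd.
have entry (a b : 'I_n) :
    (adjmx (delta_mx a 0 : 'cV[C]_n) *m A *m (delta_mx b 0 : 'cV[C]_n)) 0 0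
    = A a b.
  by rewrite adjmx_delta -rowE -colE !mxE.
have := linear_rank1_adj form_sa (delta_mx i 0) (delta_mx j 0).
rewrite /= !trace_form_rank1 => /matrixP/(_ 0 0).
rewrite entry [in RHS]mxE [in RHS]mxE entry => ->.
by rewrite !mxE.
Qed.

Lemma positive_adj {n m} {F : {linear 'M[C]_n -> 'M[C]_m}}
    (F_pos : forall A, psd A -> psd (F A)) A :
  F (adjmx A) = adjmx (F A).
Proof.
apply: linear_adj => u; apply/psd_adj/F_pos => v.
rewrite mulmxA -mulmxA.
have -> : adjmx u *m v = adjmx (adjmx v *m u) by rewrite adjmxM adjmxK.
by rewrite !mxE big_ord1 !mxE mul_conjC_ge0.
Qed.

Lemma hs_adjoint_adj {n m} {F : 'M[C]_n -> 'M[C]_m} {G}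
    (F_adj : forall A, F (adjmx A) = adjmx (F A)) (FG : hs_adjoint F G) A :
  G (adjmx A) = adjmx (G A).
Proof.
apply: hs_inj => B.
rewrite -FG /hs !adjmxK [RHS]mxtrace_mulC -[RHS]conjCK -tr_adjmx adjmxM.
rewrite -/(hs (G A) (adjmx B)) -FG F_adj /hs -adjmxM tr_adjmx conjCK.
exact: mxtrace_mulC.
Qed.

End Polarization.

Section Positivity.
Context {C : numClosedFieldType}.

Lemma pd_unit {n} {A : 'M[C]_n} : pd A -> A \in unitmx.
Proof.
move=> A_pd; rewrite -row_free_unit -kermx_eq0.
case: (pickP (fun i => row i (kermx A) != 0)) => [i ri_nz|ker0]; last first.
  by apply/eqP/row_matrixP => i; rewrite row0; have /negbFE/eqP := ker0 i.
have riA : row i (kermx A) *m A = 0 by rewrite -row_mul mulmx_ker row0.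
have adj_nz : adjmx (row i (kermx A)) != 0.
  by apply: contra ri_nz => /eqP ri0; rewrite -[row _ _]adjmxK ri0 adjmx0.
by have := A_pd _ adj_nz; rewrite adjmxK riA mul0mx mxE ltxx.
Qed.

Lemma pd_congr n (A T : 'M[C]_n) :
  pd A -> T \in unitmx -> pd (adjmx T *m A *m T).
Proof.
move=> A_pd T_unit v v_nz.
have -> : adjmx v *m (adjmx T *m A *m T) *m v = adjmx (T *m v) *m A *m (T *m v).
  by rewrite adjmxM !mulmxA.
apply: A_pd; apply: contra v_nz => /eqP Tv0.
by rewrite -(mulKmx T_unit v) Tv0 mulmx0.
Qed.

Lemma psd_congr_diag {n} {M : 'M[C]_n} (Q : 'M[C]_n) i :
  psd M -> 0 <= (adjmx Q *m M *m Q) i i.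
Proof.
move=> M_psd; pose e : 'cV[C]_n := delta_mx i 0.
have -> : (adjmx Q *m M *m Q) i i = (adjmx (Q *m e) *m M *m (Q *m e)) 0 0.
  by rewrite adjmxM adjmx_delta !mulmxA -colE -!mulmxA -rowE mulmxA !mxE.
exact: M_psd.
Qed.

(* tr (Y D) >= 0 for positive semidefinite Y and D: diagonalize Y by a
   unitary P, so tr (Y D) = sum_i d_i (P D P')_ii with d_i >= 0. *)
Lemma tr_psd {n} {Y D : 'M[C]_n} : psd Y -> psd D -> 0 <= \tr (Y *m D).
Proof.
move=> Y_psd D_psd.
have tstarE (M : 'M[C]_n) : map_mx Num.conj (M^T) = adjmx M.
  by rewrite /adjmx map_trmx.
have Y_normal : Y \is normalmx by apply/normalmxP; rewrite tstarE psd_adj.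
have /orthomx_spectralP Y_spec := Y_normal.
set P := spectralmx Y in Y_spec; set d := spectral_diag Y in Y_spec.
have P_unitary : P \is unitarymx by apply: spectral_unitarymx.
have invP : invmx P = adjmx P by rewrite invmx_unitary // tstarE.
have PPs : P *m adjmx P = 1%:M by rewrite -tstarE; apply/unitarymxP.
have diagE : diag_mx d = adjmx (adjmx P) *m Y *m adjmx P.
  by rewrite adjmxK Y_spec invP !mulmxA PPs mul1mx -mulmxA PPs mulmx1.
rewrite Y_spec invP -!mulmxA mxtrace_mulC -!mulmxA mul_diag_mx /mxtrace.
apply: sumr_ge0 => i _; rewrite mxE; apply: mulr_ge0.
  by have := psd_congr_diag (adjmx P) i Y_psd; rewrite -diagE mxE eqxx mulr1n.
by have := psd_congr_diag (adjmx P) i D_psd; rewrite adjmxK !mulmxA.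
Qed.

Lemma sqrtm_unit {n} {A S : 'M[C]_n} :
  is_sqrtm A S -> A \in unitmx -> S \in unitmx.
Proof. by case=> _ <-; rewrite unitmx_mul => /andP[]. Qed.

End Positivity.

Section TraceIdentities.
Context {C : numClosedFieldType}.

Lemma invmxM n (A B : 'M[C]_n) : A \in unitmx -> B \in unitmx ->
  invmx (A *m B) = invmx B *m invmx A.
Proof.
move=> A_unit B_unit.
have AB_unit : A *m B \in unitmx by rewrite unitmx_mul A_unit.
have AB_inv : (A *m B) *m (invmx B *m invmx A) = 1%:M.
  by rewrite -mulmxA (mulmxA B) mulmxV // mul1mx mulmxV.
by rewrite -[invmx (A *m B)]mulmx1 -AB_inv mulmxA mulVmx // mul1mx.
Qed.

Lemma congr_inv {m n} (K : 'M[C]_(m, n)) {H S : 'M[C]_n} :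
  adjmx H = H -> H \in unitmx -> S \in unitmx ->
  K *m H *m invmx (H *m S *m H) *m adjmx (K *m H) = K *m invmx S *m adjmx K.
Proof.
move=> H_sa H_unit S_unit.
rewrite !invmxM ?unitmx_mul ?H_unit ?S_unit // adjmxM H_sa !mulmxA.
by rewrite mulmxK // mulmxKV.
Qed.

Lemma hs_sandwich n (W M P : 'M[C]_n) :
  hs W (M *m W *m P) = \tr (M *m (W *m P *m adjmx W)).
Proof. by rewrite /hs mxtrace_mulC !mulmxA. Qed.

Lemma tr_hs_adjoint {n m} {F : 'M[C]_n -> 'M[C]_m} {G}
    (G_adj : forall A, G (adjmx A) = adjmx (G A)) (FG : hs_adjoint F G) Y N :
  \tr (F Y *m N) = \tr (Y *m G N).
Proof.
rewrite mxtrace_mulC -{1}[N]adjmxK -/(hs _ _) FG /hs G_adj adjmxK.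
exact: mxtrace_mulC.
Qed.

End TraceIdentities.

Local Open Scope complex_scope.

Theorem mainTheorem1 (R : realType) (nA nB : nat)
  (Phi : {linear 'M[R[i]]_nA -> 'M[R[i]]_nB})
  (Phis : 'M[R[i]]_nB -> 'M[R[i]]_nA)
  (Phi_pos : forall A : 'M[R[i]]_nA, psd A -> psd (Phi A))
  (Phi_tp : forall A : 'M[R[i]]_nA, \tr (Phi A) = \tr A)
  (Phis_adj : hs_adjoint Phi Phis)
  (Schwarz : forall rho sigma : 'M[R[i]]_nB, pd sigma ->
      Phis sigma \in unitmx ->
      mx_le (Phis (adjmx rho) *m invmx (Phis sigma) *m Phis rho)
            (Phis (adjmx rho *m invmx sigma *m rho)))
  (X : 'M[R[i]]_nA) (X_pd : pd X) (PhiX_inv : Phi X \in unitmx)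
  (omega : 'M[R[i]]_nB) (omega_pd : pd omega)
  (Xh : 'M[R[i]]_nA) (Xh_sqrt : is_sqrtm X Xh)
  (Th : 'M[R[i]]_nB) (Th_sqrt : is_sqrtm (Phi X) Th)
  (tau : 'M[R[i]]_nA)
  (tau_def : tau = Xh *m Phis (invmx Th *m omega *m invmx Th) *m Xh)
  (tau_inv : tau \in unitmx)
  (V : 'M[R[i]]_nB -> 'M[R[i]]_nA)
  (V_def : forall rho, V rho = Phis (rho *m invmx Th) *m Xh)
  (Vs : 'M[R[i]]_nA -> 'M[R[i]]_nB) (Vs_adj : hs_adjoint V Vs)
  (Y : 'M[R[i]]_nA) (Y_psd : psd Y) :
  op_le (fun Z => Vs (relmod Y tau (V Z))) (relmod (Phi Y) omega).
Proof.
move=> Z; rewrite /relmod.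
have Phis_adjmx := hs_adjoint_adj (positive_adj Phi_pos) Phis_adj.
have Xh_sa := psd_adj Xh_sqrt.1.
have Xh_unit := sqrtm_unit Xh_sqrt (pd_unit X_pd).
have Th_unit := sqrtm_unit Th_sqrt PhiX_inv.
set iT := invmx Th in tau_def V_def *.
have iT_sa : adjmx iT = iT by rewrite adjmx_inv psd_adj //; case: Th_sqrt.
have iT_unit : iT \in unitmx by rewrite unitmx_inv.
set sigma := iT *m omega *m iT in tau_def.
have sigma_pd : pd sigma by rewrite /sigma -{1}iT_sa; apply: pd_congr.
set S := Phis sigma in tau_def.
have S_unit : S \in unitmx.
  by move: tau_inv; rewrite tau_def !unitmx_mul => /andP[/andP[]].
set K := Z *m iT.
have lhsE : hs Z (Phi Y *m Z *m invmx omega) =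
    \tr (Y *m Phis (K *m invmx sigma *m adjmx K)).
  rewrite hs_sandwich -(tr_hs_adjoint Phis_adjmx Phis_adj).
  by rewrite /K /sigma (congr_inv Z iT_sa iT_unit (pd_unit omega_pd)).
have rhsE : hs Z (Vs (Y *m V Z *m invmx tau)) =
    \tr (Y *m (Phis K *m invmx S *m Phis (adjmx K))).
  rewrite (hs_adjointC Vs_adj) hs_sandwich V_def tau_def.
  by rewrite (congr_inv (Phis K) Xh_sa Xh_unit S_unit) -Phis_adjmx.
rewrite hsB lhsE rhsE -linearB -mulmxBr.
have schwarz_K := Schwarz (adjmx K) sigma sigma_pd S_unit.
rewrite adjmxK in schwarz_K.
exact: tr_psd Y_psd schwarz_K.
Qed.
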